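(* Let $P$ be a quasi-lattice ordered subsemigroup of a group $Q$ and $\Lambda$ an $(r,d)$-proper topological $P$-graph, with path space $\Omega$ and boundary path space $\partial\Omega$. Then (a) $\partial\Omega$ is a closed subset of $\Omega$; (b) if $A\in\partial\Omega$ and $n\in P$ with $A\cdot n\neq\emptyset$, then $A\cdot n\in\partial\Omega$; (c) if $B\in\partial\Omega$ and $\rho\in\Lambda$ satisfies $s(\rho)=r(B)$, then $\rho B\in\partial\Omega$.
   Context: Quasi-lattice ordered: $P\subset Q$ subsemigroup with $P\cap P^{-1}=\{e\}$ such that any two elements having a common upper bound (for $m\le n$ iff $n=mp$, $p\in P$) have a least upper bound. Topological $P$-graph: small category $\Lambda$, vertices $\Lambda^{(0)}\subset\Lambda$, $r,s:\Lambda\to\Lambda^{(0)}$, composition on composable pairs ($s(\lambda)=r(\mu)$); $\Lambda,\Lambda^{(0)}$ locally compact Hausdorff, $r,s$ continuous, $s$ a local homeomorphism, inclusion continuous, composition continuous and open; continuous $d:\Lambda\to P$ multiplicative, $e$ on vertices, with composition $\Lambda^m*\Lambda^n\to\Lambda^{mn}$ a homeomorphism. $(r,d)$-proper: $(r,d):\Lambda\to\Lambda^{(0)}\times P$ proper. $\mu\le\lambda$ iff $\lambda=\mu\nu$. $\Omega$: nonempty closed hereditary directed subsets of $\Lambda$ with the relative Fell topology; every $A\in\Omega$ is contained in $r^{-1}(x)$ for a unique vertex $x=:r(A)$. $A\cdot n=\{\nu:\exists\mu\in\Lambda^n,\mu\nu\in A\}$; $\rho B=\bigcup_{\nu\in B}\{\lambda:\lambda\le\rho\nu\}$.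 $E\subset\Lambda$ is exhaustive if for every $\lambda$ with $r(\lambda)\in r(E)$ there is $\mu\in E$ such that $\lambda,\mu$ have a common upper bound. For $A\in\Omega$, $\lambda\in A$ is extendable in $A$ if for every compact exhaustive $E$ with $r(E)$ a neighborhood of $s(\lambda)$ there is $\mu\in E$ with $\lambda\mu\in A$. $A$ is a boundary path if all its elements are extendable in $A$; $\partial\Omega$ is the set of boundary paths. *)

From mathcomp Require Import all_boot.
From mathcomp Require Import boolp classical_sets cardinality topology.

Set Implicit Arguments.
Unset Strict Implicit.
Unset Printing Implicit Defensive.

Local Open Scope classical_set_scope.

Record group_law (Q : Type) := GroupLaw {
  gmul : Q -> Q -> Q;
  ginv : Q -> Q;
  gone : Q;
  gmulA : forall x y z, gmul x (gmul y z) = gmul (gmul x y) z;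
  gmul1 : forall x, gmul gone x = x;
  gmulx1 : forall x, gmul x gone = x;
  gmulV : forall x, gmul (ginv x) x = gone;
  gmulxV : forall x, gmul x (ginv x) = gone }.

Definition qle Q (G : group_law Q) (P : set Q) (m n : Q) : Prop :=
  exists2 p, P p & n = gmul G m p.

Definition quasi_lattice_ordered Q (G : group_law Q) (P : set Q) : Prop :=
  [/\ (forall p q, P p -> P q -> P (gmul G p q)),
      (forall x, (P x /\ P (ginv G x)) <-> x = gone G) &
      (forall m n, P m -> P n ->
         (exists k, qle G P m k /\ qle G P n k) ->
         exists l, [/\ qle G P m l, qle G P n l &
                    forall k, qle G P m k -> qle G P n k -> qle G P l k])].

(* Data of a topological P-graph: morphism space L, vertex space V,     *)
(* the inclusion of vertices (as identity morphisms), range, source,    *)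
(* (total, only meaningful on composable pairs) composition and degree. *)
Record PGraph (Q : Type) (L V : topologicalType) := MkPGraph {
  vtx : V -> L;
  rng : L -> V;
  src : L -> V;
  comp : L -> L -> L;
  deg : L -> Q }.

Section PGraphDefs.
Context {Q : Type} (G : group_law Q) (P : set Q) {L V : topologicalType}.
Variable g : PGraph Q L V.

Definition composable : set (L * L) := [set x | src g x.1 = rng g x.2].
Definition compU (x : L * L) : L := comp g x.1 x.2.

Definition local_homeo (T U : topologicalType) (f : T -> U) : Prop :=
  forall x, exists O : set T,
    [/\ open O, O x, (forall y z, O y -> O z -> f y = f z -> y = z),
        {within O, continuous f} &
        (forall W, open W -> W `<=` O -> open (f @` W))].

Definition is_topological_PGraph : Prop :=
  [/\
      [/\ injective (vtx g),
          (forall v, rng g (vtx g v) = v /\ src g (vtx g v) = v),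
          (forall l, comp g (vtx g (rng g l)) l = l /\ comp g l (vtx g (src g l)) = l),
          (forall l m, src g l = rng g m ->
             rng g (comp g l m) = rng g l /\ src g (comp g l m) = src g m) &
          (forall l m n, src g l = rng g m -> src g m = rng g n ->
             comp g (comp g l m) n = comp g l (comp g m n))],
      [/\ hausdorff_space L, locally_compact [set: L],
          hausdorff_space V, locally_compact [set: V] &
          [/\ continuous (rng g) /\ continuous (src g), local_homeo (src g),
              continuous (vtx g),
              {within composable, continuous compU} &
              (forall W : set (L * L), open W -> open (compU @` (W `&` composable)))]] &
      (* degree functor d : Lambda -> P, continuous for the discrete topology *)
      [/\ (forall l, P (deg g l)),
          (forall n, open (deg g @^-1` [set n])),
          (forall v, deg g (vtx g v) = gone G),
          (forall l m, src g l = rng g m -> deg g (comp g l m) = gmul G (deg g l) (deg g m)) &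
          (* composition Lambda^m * Lambda^n -> Lambda^{mn} is a homeomorphism *)
          (forall m n, P m -> P n -> exists fac : L -> L * L,
             [/\ (forall l, deg g l = gmul G m n ->
                    [/\ composable (fac l), deg g (fac l).1 = m,
                        deg g (fac l).2 = n & compU (fac l) = l]),
                 (forall x y, src g x = rng g y -> deg g x = m -> deg g y = n ->
                    fac (comp g x y) = (x, y)) &
                 {within deg g @^-1` [set gmul G m n], continuous fac}])]].

(* (r,d) : Lambda -> Lambda^0 x P is proper (P discrete) *)
Definition rd_proper : Prop :=
  forall (K : set V) (n : Q), compact K -> P n ->
    compact (rng g @^-1` K `&` deg g @^-1` [set n]).

Definition lep (mu la : L) : Prop :=
  exists nu, src g mu = rng g nu /\ la = comp g mu nu.

Definition hereditary (A : set L) : Prop :=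
  forall la mu, A la -> lep mu la -> A mu.

Definition directed (A : set L) : Prop :=
  forall la mu, A la -> A mu -> exists nu, [/\ A nu, lep la nu & lep mu nu].

Definition Omega (A : set L) : Prop :=
  [/\ A !=set0, closed A, hereditary A & directed A].

Definition dotP (A : set L) (n : Q) : set L :=
  [set nu | exists mu, [/\ deg g mu = n, src g mu = rng g nu & A (comp g mu nu)]].

Definition rho_mul (rho : L) (B : set L) : set L :=
  [set la | exists nu, [/\ B nu, src g rho = rng g nu & lep la (comp g rho nu)]].

Definition exhaustive (E : set L) : Prop :=
  forall la, (rng g @` E) (rng g la) ->
    exists2 mu, E mu & exists nu, lep la nu /\ lep mu nu.

Definition extendable (A : set L) (la : L) : Prop :=
  A la /\
  forall E : set L, compact E -> exhaustive E -> nbhs (src g la) (rng g @` E) ->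
    exists mu, [/\ E mu, src g la = rng g mu & A (comp g la mu)].

Definition boundary_path (A : set L) : Prop :=
  Omega A /\ forall la, A la -> extendable A la.

(* Fell topology on closed subsets of L: basic open sets
   U(K; F) = {B | B cap K = 0, B cap U <> 0 for U in F},
   K compact, F a finite family of open sets. *)
Definition fell_basic (K : set L) (F : set (set L)) (B : set L) : Prop :=
  B `&` K = set0 /\ forall U, F U -> B `&` U !=set0.

(* S is closed in Omega for the relative Fell topology:
   its complement in Omega is relatively open. *)
Definition closed_in_Omega (S : set (set L)) : Prop :=
  forall A, Omega A -> ~ S A ->
    exists K F, [/\ compact K, finite_set F, (forall U, F U -> open U),
                    fell_basic K F A &
                    forall B, Omega B -> fell_basic K F B -> ~ S B].

End PGraphDefs.

(* A.n and rho B are closed because, degree by degree, they are projections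
   along compact sets: (r,d)-properness makes the fibres of (r,d) compact, and
   unique factorization makes the prefix of a given degree a continuous function
   of the path.

   (a) If A is not a boundary path, some la in A and some compact exhaustive E
   witness it. For W a compact neighbourhood of la inside its degree fibre, the
   Fell set of paths missing W E and meeting interior W /\ s^-1 (interior (r E))
   contains A and no boundary path, since two elements of a path with the same
   degree coincide.
   (b) Extensions of la in A.n are exactly the extensions of mu la in A.
   (c) Every element of rho B is a prefix of some rho nu with nu extendable in B,
   hence rho nu extendable in rho B; so it suffices that la is extendable in a
   path A as soon as la w is. Given E at s la, take a compact neighbourhood W of
   w on which s is injective and d constant, and let E' be the set of be such
   that w' be is a least common extension of some w' in W and some mu in E.
   Then E' is compact, exhaustive and r E' is a neighbourhood of s w, so
   la w be lies in A for some be in E'; then w' = w, and la mu <= la w be. *)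

From Pilot Require Import Defs.
From mathcomp Require Import all_boot.
From mathcomp Require Import boolp classical_sets cardinality topology.
Set Implicit Arguments.
Unset Strict Implicit.
Unset Printing Implicit Defensive.
Local Open Scope classical_set_scope.

Lemma within_continuousP {X Y : topologicalType} {D : set X} {f : X -> Y} :
  {within D, continuous f} <->
  forall x, D x -> forall O, nbhs (f x) O -> nbhs x (fun y => D y -> O (f y)).
Proof. by rewrite subspace_continuousP. Qed.

Section WithinContinuity.
Context {X Y Z : topologicalType}.

Lemma within_continuous_comp_in (D : set X) (E : set Y) (f : X -> Y) (h : Y -> Z) :
  {within D, continuous f} -> {within E, continuous h} -> f @` D `<=` E ->
  {within D, continuous (h \o f)}.
Proof.
move=> /within_continuousP cf /within_continuousP ch DE.
apply/within_continuousP => x Dx O NO.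
have := cf x Dx _ (ch (f x) (DE _ (imageP f Dx)) O NO).
by apply: filterS => y h1 Dy; apply: (h1 Dy (DE _ (imageP f Dy))).
Qed.

Lemma within_continuous_pair (D : set X) (f1 : X -> Y) (f2 : X -> Z) :
  {within D, continuous f1} -> {within D, continuous f2} ->
  {within D, continuous (fun x => (f1 x, f2 x))}.
Proof.
move=> /within_continuousP c1 /within_continuousP c2.
apply/within_continuousP => x Dx O [[N1 N2] /= [n1 n2] sub].
have := @filterI _ _ (nbhs_filter x) _ _ (c1 x Dx _ n1) (c2 x Dx _ n2).
by apply: filterS => y [h1 h2] Dy; apply: sub; split; [apply: h1|apply: h2].
Qed.

Lemma closed_within_eq (D : set X) (f1 f2 : X -> Y) : hausdorff_space Y ->
  closed D -> {within D, continuous f1} -> {within D, continuous f2} ->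
  closed (D `&` [set x | f1 x = f2 x]).
Proof.
move=> hY cD /within_continuousP c1 /within_continuousP c2 z cz.
have Dz : D z by apply: cD => B NB; have [w [[Dw _] Bw]] := cz B NB; exists w.
split => //; apply: hY => A B NA NB.
have N := @filterI _ _ (nbhs_filter z) _ _ (c1 z Dz A NA) (c2 z Dz B NB).
have [w [[Dw ew] [h1 h2]]] := cz _ N.
by exists (f1 w); split; [apply: h1|rewrite ew; apply: h2].
Qed.

Lemma closed_within_preimage (D : set X) (f : X -> Y) (C : set Y) :
  closed D -> {within D, continuous f} -> closed C -> closed (D `&` f @^-1` C).
Proof.
move=> cD /within_continuousP cf cC z cz.
have Dz : D z by apply: cD => B NB; have [w [[Dw _] Bw]] := cz B NB; exists w.
split => //; apply: cC => B NB.
have [w [[Dw Cw] h]] := cz _ (cf z Dz B NB).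
by exists (f w); split => //; apply: h.
Qed.

End WithinContinuity.

Lemma closed_proj_compact {X Y : topologicalType} (K : set X) (C : set (X * Y)) :
  compact K -> closed C -> closed [set y | exists2 x, K x & C (x, y)].
Proof.
move=> cK cC y cy.
pose F := filter_from (nbhs y)
  (fun N => [set x | K x /\ exists2 y', N y' & C (x, y')]).
have FF : ProperFilter F.
  apply: filter_from_proper.
    apply: filter_from_filter; first by exists setT; apply: filterT.
    move=> N1 N2 h1 h2; exists (N1 `&` N2); first exact: filterI.
    by move=> x [Kx [y' [n1 n2] Cy]]; split; split => //; exists y'.
  move=> N NN; have [y' [[x Kx Cx] Ny']] := cy N NN.
  by exists x; split => //; exists y'.
have FK : F K by exists setT => [|x []]; first exact: filterT.
have [x [Kx clx]] := cK F FF FK.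
exists x => //; apply: cC => O [[N1 N2] /= [n1 n2] sub].
have FN2 : F [set x | K x /\ exists2 y', N2 y' & C (x, y')] by exists N2.
have [x' [[Kx' [y' Ny' Cxy]] Nx']] := clx _ _ FN2 n1.
by exists (x', y'); split => //; apply: sub.
Qed.

Lemma compact_nbhs_sub {X : topologicalType} (x : X) (O : set X) :
  hausdorff_space X -> locally_compact [set: X] -> nbhs x O ->
  exists2 W, compact W & nbhs x W /\ W `<=` O.
Proof.
move=> hX lcX NO; have [U] := lcX x I; rewrite withinET => NU [cU clU].
have [D ND sub] := compact_regular hX cU NU NO.
exists (closure (D `&` U)); last split.
- apply: (@subclosed_compact _ _ U); [exact: closed_closure|exact: cU|].
  by move=> z /(closureS (@subIsetr _ D U)); rewrite -(proj1 (closure_id U) clU).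
- exact: filterS (@subset_closure _ _) (@filterI _ _ (nbhs_filter x) _ _ ND NU).
- by move=> z /(closureS (@subIsetl _ D U)) /sub.
Qed.

Lemma compact_fibre_cover {X : topologicalType} {T : Type} (E : set X) (f : X -> T) :
  compact E -> (forall q, open (f @^-1` [set q])) ->
  exists s : seq X, E `<=` \bigcup_(e in [set` s]) f @^-1` [set f e].
Proof.
move=> /compact_near_coveringP cE fo.
pose F : set_system (seq X) :=
  [set S | exists s0 : seq X, forall s : seq X, {subset s0 <= s} -> S s].
have FF : Filter F.
  split; first by exists [::].
  - move=> S1 S2 [s1 h1] [s2 h2]; exists (s1 ++ s2) => s sub; split.
      by apply: h1 => x xs; apply: sub; rewrite mem_cat xs.
    by apply: h2 => x xs; apply: sub; rewrite mem_cat xs orbT.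
  - by move=> S1 S2 S12 [s1 h1]; exists s1 => s /h1 /S12.
pose covered (s : seq X) x := (\bigcup_(e in [set` s]) f @^-1` [set f e]) x.
have [|s0 h] := cE _ _ covered FF.
  move=> x Ex; exists (f @^-1` [set f x], [set s | x \in s]) => /=.
    split; first exact: open_nbhs_nbhs.
    by exists [:: x] => s; apply; rewrite mem_head.
  by move=> [y s] /= [fy xs]; exists x.
by exists s0 => x Ex; exact: h s0 (fun _ h => h) x Ex.
Qed.

Lemma closed_fibrewise {X : topologicalType} {T : Type} (S : set X) (f : X -> T) :
  (forall q, open (f @^-1` [set q])) -> (forall q, closed (S `&` f @^-1` [set q])) ->
  closed S.
Proof.
move=> fo cS x clx; suff : closure (S `&` f @^-1` [set f x]) x by move=> /cS [].
move=> O NO; have Nf : nbhs x (f @^-1` [set f x]) by exact: open_nbhs_nbhs.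
by have [y [Sy [Oy fy]]] := clx _ (@filterI _ _ (nbhs_filter x) _ _ NO Nf); exists y.
Qed.

Lemma continuous_fst {X Y : topologicalType} : continuous (@fst X Y).
Proof. by move=> z; exact: cvg_fst. Qed.

Lemma continuous_snd {X Y : topologicalType} : continuous (@snd X Y).
Proof. by move=> z; exact: cvg_snd. Qed.

Section QuasiLatticeOrder.
Context {Q : Type} (G : group_law Q) (P : set Q).
Local Notation mul := (gmul G).

Lemma gmulI a : injective (mul a).
Proof. by move=> b b' /(congr1 (mul (ginv G a))); rewrite !gmulA !gmulV !gmul1. Qed.

Definition islub (a b l : Q) :=
  [/\ qle G P a l, qle G P b l & forall k, qle G P a k -> qle G P b k -> qle G P l k].

Hypothesis qlo : quasi_lattice_ordered G P.

Lemma qle_anti a b : qle G P a b -> qle G P b a -> a = b.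
Proof.
move=> [p Pp ->] [q Pq]; rewrite -gmulA -{1}(gmulx1 G a) => /gmulI pq1.
have pV : ginv G p = q.
  by have := congr1 (mul (ginv G p)) pq1; rewrite gmulx1 gmulA gmulV gmul1.
have : P p /\ P (ginv G p) by rewrite pV.
by case: qlo => _ H _ /H ->; rewrite gmulx1.
Qed.

Lemma islub_uniq a b l1 l2 : islub a b l1 -> islub a b l2 -> l1 = l2.
Proof. by move=> [? ? min1] [? ? min2]; apply: qle_anti; [exact: min1|exact: min2]. Qed.

Lemma islub_ex a b k : P a -> P b -> qle G P a k -> qle G P b k -> exists l, islub a b l.
Proof. by move=> Pa Pb ak bk; case: qlo => _ _ H; apply: H => //; exists k. Qed.

End QuasiLatticeOrder.

Section PGraph.
Context {Q : Type} (G : group_law Q) (P : set Q) {L V : topologicalType}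
  (g : PGraph Q L V).
Hypothesis qlo : quasi_lattice_ordered G P.
Hypothesis tg : is_topological_PGraph G P g.
Hypothesis rdp : rd_proper P g.

Local Notation r := (rng g).
Local Notation s := (src g).
Local Notation c := (Defs.comp g).
Local Notation d := (deg g).
Local Notation mul := (gmul G).
Local Notation lep := (lep g).

Lemma rng_vtx v : r (vtx g v) = v.
Proof. by case: tg => -[_ H _ _ _] _ _; case: (H v). Qed.

Lemma comp_vtxr l : c l (vtx g (s l)) = l.
Proof. by case: tg => -[_ _ H _ _] _ _; case: (H l). Qed.

Lemma rng_comp l m : s l = r m -> r (c l m) = r l.
Proof. by case: tg => -[_ _ _ H _] _ _ /H []. Qed.

Lemma src_comp l m : s l = r m -> s (c l m) = s m.
Proof. by case: tg => -[_ _ _ H _] _ _ /H []. Qed.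

Lemma compA l m n : s l = r m -> s m = r n -> c (c l m) n = c l (c m n).
Proof. by case: tg => -[_ _ _ _ H] _ _; apply: H. Qed.

Lemma hausdorff_L : hausdorff_space L.
Proof. by case: tg => _ [H _ _ _ _] _. Qed.

Lemma locally_compact_L : locally_compact [set: L].
Proof. by case: tg => _ [_ H _ _ _] _. Qed.

Lemma hausdorff_V : hausdorff_space V.
Proof. by case: tg => _ [_ _ H _ _] _. Qed.

Lemma continuous_rng : continuous r.
Proof. by case: tg => _ [_ _ _ _ [[H _] _ _ _ _]] _. Qed.

Lemma continuous_src : continuous s.
Proof. by case: tg => _ [_ _ _ _ [[_ H] _ _ _ _]] _. Qed.

Lemma local_homeo_src : local_homeo s.
Proof. by case: tg => _ [_ _ _ _ [_ H _ _ _]] _. Qed.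

Lemma continuous_compU : {within composable g, continuous compU g}.
Proof. by case: tg => _ [_ _ _ _ [_ _ _ H _]] _. Qed.

Lemma P_deg l : P (d l).
Proof. by case: tg => _ _ [H _ _ _ _]. Qed.

Lemma open_deg_fibre n : open (d @^-1` [set n]).
Proof. by case: tg => _ _ [_ H _ _ _]. Qed.

Lemma deg_comp l m : s l = r m -> d (c l m) = mul (d l) (d m).
Proof. by case: tg => _ _ [_ _ _ H _]; apply: H. Qed.

Lemma deg_factor m n : P m -> P n -> exists fac : L -> L * L,
  [/\ (forall l, d l = mul m n ->
         [/\ composable g (fac l), d (fac l).1 = m, d (fac l).2 = n & compU g (fac l) = l]),
      (forall x y, s x = r y -> d x = m -> d y = n -> fac (c x y) = (x, y)) &
      {within d @^-1` [set mul m n], continuous fac}].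
Proof. by case: tg => _ _ [_ _ _ _ H]; apply: H. Qed.

Lemma factor_deg m n l : P m -> P n -> d l = mul m n ->
  exists a b, [/\ s a = r b, d a = m, d b = n & c a b = l].
Proof.
move=> Pm Pn dl; have [fac [Hfac _ _]] := deg_factor Pm Pn.
by have [? ? ? ?] := Hfac l dl; exists (fac l).1, (fac l).2.
Qed.

Lemma comp_inj_deg a1 b1 a2 b2 : s a1 = r b1 -> s a2 = r b2 ->
  c a1 b1 = c a2 b2 -> d a1 = d a2 -> a1 = a2 /\ b1 = b2.
Proof.
move=> e1 e2 e da.
have db : d b1 = d b2 by apply: (@gmulI _ G (d a1)); rewrite -deg_comp // e deg_comp // da.
have [fac [_ Hfac _]] := deg_factor (P_deg a1) (P_deg b1).
have := Hfac _ _ e1 erefl erefl; rewrite e Hfac // => -[-> ->] //.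
Qed.

Lemma lep_refl l : lep l l.
Proof. by exists (vtx g (s l)); rewrite rng_vtx comp_vtxr. Qed.

Lemma lep_comp a b : s a = r b -> lep a (c a b).
Proof. by move=> e; exists b. Qed.

Lemma lep_rng a l : lep a l -> r a = r l.
Proof. by case=> nu [e ->]; rewrite rng_comp. Qed.

Lemma lep_trans a b l : lep a b -> lep b l -> lep a l.
Proof.
move=> [x [ex ->]] [y [ey ->]]; have ey' : s x = r y by rewrite -ey src_comp.
by exists (c x y); rewrite rng_comp // compA.
Qed.

Lemma lep_deg_inj a b l : lep a l -> lep b l -> d a = d b -> a = b.
Proof. by move=> [x [ex ->]] [y [ey e]] dab; case: (comp_inj_deg ex ey e dab). Qed.

Lemma qle_lep a l : lep a l -> qle G P (d a) (d l).
Proof. by move=> [x [ex ->]]; exists (d x); [exact: P_deg|rewrite deg_comp]. Qed.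

Lemma lep_qle a b l : lep a l -> lep b l -> qle G P (d a) (d b) -> lep a b.
Proof.
move=> al [y [ey el]] [p Pp dab]; subst l.
have [b1 [b2 [e12 d1 _ eb]]] := factor_deg (P_deg a) Pp dab.
have b1l : lep b1 (c b y) by apply: lep_trans (lep_comp e12) _; rewrite eb; exact: lep_comp.
by rewrite (lep_deg_inj al b1l (esym d1)) -eb; exact: lep_comp.
Qed.

Lemma lep_compl rho a b : s rho = r a -> lep a b -> lep (c rho a) (c rho b).
Proof. by move=> e [x [ex ->]]; exists x; rewrite src_comp // compA. Qed.

Lemma lep_compl_cancel rho a b : s rho = r a -> s rho = r b ->
  lep (c rho a) (c rho b) -> lep a b.
Proof.
move=> ea eb [x [ex e]]; have ex' : s a = r x by rewrite -ex src_comp.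
exists x; split => //.
by case: (@comp_inj_deg rho b rho (c a x)) => //; rewrite ?rng_comp // e compA.
Qed.

Lemma Omega_rng A a b : Omega g A -> A a -> A b -> r a = r b.
Proof.
by move=> [_ _ _ dA] Aa Ab; have [nu [_ /lep_rng -> /lep_rng ->]] := dA a b Aa Ab.
Qed.

Lemma closed_composable : closed (composable g).
Proof.
have cD : closed ([set: L * L] `&` [set z | (s \o fst) z = (r \o snd) z]).
  apply: closed_within_eq hausdorff_V closedT _ _; apply: continuous_subspaceT.
    by move=> z; apply: continuous_comp; [exact: continuous_fst|exact: continuous_src].
  by move=> z; apply: continuous_comp; [exact: continuous_snd|exact: continuous_rng].
by rewrite setTI in cD.
Qed.

Lemma closed_deg_fibre n : closed (d @^-1` [set n]).
Proof.
move=> z cz; have N : nbhs z (d @^-1` [set d z]).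
  by apply: open_nbhs_nbhs; split => //; exact: open_deg_fibre.
by case: (cz _ N) => w []; rewrite /preimage /= => -> ->.
Qed.

Lemma continuous_compl rho : {within [set y | s rho = r y], continuous (c rho)}.
Proof.
have pair_rho : {within [set y | s rho = r y], continuous (fun y : L => (rho, y))}.
  apply: within_continuous_pair; apply: continuous_subspaceT; last by move=> ?.
  exact: cst_continuous.
by apply: within_continuous_comp_in pair_rho continuous_compU _ => _ [y ey <-].
Qed.

Lemma closed_prefix m n : P m -> P n ->
  closed [set xy : L * L | [/\ d xy.1 = mul m n, d xy.2 = m & lep xy.2 xy.1]].
Proof.
move=> Pm Pn; have [fac [Hfac _ cfac]] := deg_factor Pm Pn.
pose D := fst @^-1` (d @^-1` [set mul m n]) : set (L * L).
have -> : [set xy : L * L | [/\ d xy.1 = mul m n, d xy.2 = m & lep xy.2 xy.1]] =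
    D `&` [set xy | (fac xy.1).1 = xy.2].
  apply/seteqP; split => -[x y] /=.
  - move=> [dx dy yx]; split => //=; have [cx dx1 _ ex] := Hfac x dx.
    apply: lep_deg_inj (yx) _; last by rewrite dx1.
    by rewrite -[X in lep _ X]ex; exact: lep_comp.
  - move=> [dx <-]; have [cx dx1 _ ex] := Hfac x dx.
    by split => //; rewrite -[X in lep _ X]ex; exact: lep_comp.
apply: closed_within_eq hausdorff_L _ _ _.
- by apply: preimage_closed; [move=> z _; exact: continuous_fst|exact: closed_deg_fibre].
- have cf : {within D, continuous (fac \o fst)}.
    apply: within_continuous_comp_in cfac _ => [|_ [z Dz <-] //].
    exact: continuous_subspaceT continuous_fst.
  have cfst : {in (fac \o fst) @` D, continuous (@fst L L)}.
    by move=> z _; exact: continuous_fst.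
  exact: (@within_continuous_comp _ _ _ _ _ _ cfst cf).
- exact: continuous_subspaceT continuous_snd.
Qed.

Lemma hereditary_dotP A n : hereditary g A -> hereditary g (dotP g A n).
Proof.
move=> hA la nu [mu [dm em Aml]] nula; have em' : s mu = r nu by rewrite em (lep_rng nula).
by exists mu; split => //; apply: hA Aml _; exact: lep_compl.
Qed.

Lemma directed_dotP A n : directed g A -> directed g (dotP g A n).
Proof.
move=> dA la1 la2 [mu1 [d1 e1 A1]] [mu2 [d2 e2 A2]].
have [nu [Anu l1 l2]] := dA _ _ A1 A2.
have m1 := lep_trans (lep_comp e1) l1.
have e12 : mu1 = mu2 by apply: lep_deg_inj m1 (lep_trans (lep_comp e2) l2) _; rewrite d1 d2.
subst mu2; case: m1 => rh [erh enu].
exists rh; split; first by exists mu1; rewrite -enu.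
- by apply: (lep_compl_cancel e1 erh); rewrite -enu.
- by apply: (lep_compl_cancel e2 erh); rewrite -enu.
Qed.

Lemma closed_dotP A n : Omega g A -> P n -> closed (dotP g A n).
Proof.
move=> OA Pn; case: (OA) => -[a0 Aa0] cA _ _.
pose K := r @^-1` [set r a0] `&` d @^-1` [set n].
pose C := composable g `&` compU g @^-1` A.
have -> : dotP g A n = [set y | exists2 x, K x & C (x, y)].
  apply/seteqP; split => y.
  - move=> [mu [dm em Am]]; exists mu; last by split.
    by split => //; rewrite /= -(rng_comp em); exact: Omega_rng OA Am Aa0.
  - by move=> [mu [rm dm] [em Am]]; exists mu.
apply: closed_proj_compact; first exact: rdp (@compact_set1 _ (r a0)) Pn.
exact: closed_within_preimage closed_composable continuous_compU cA.
Qed.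

Lemma Omega_dotP A n : Omega g A -> P n -> dotP g A n !=set0 ->
  Omega g (dotP g A n).
Proof.
move=> OA Pn ne; case: (OA) => _ _ hA dA.
by split => //; [exact: closed_dotP|exact: hereditary_dotP|exact: directed_dotP].
Qed.

Lemma extendable_dotP A mu la : s mu = r la ->
  extendable g A (c mu la) -> extendable g (dotP g A (d mu)) la.
Proof.
move=> em [Aml ext]; split; first by exists mu.
move=> E cE exE nE; rewrite -(src_comp em) in nE.
have [nu [Enu enu Anu]] := ext E cE exE nE.
have enu' : s la = r nu by rewrite -enu src_comp.
by exists nu; split => //; exists mu; rewrite rng_comp // -compA.
Qed.

Lemma boundary_dotP A n : boundary_path g A -> P n -> dotP g A n !=set0 ->
  boundary_path g (dotP g A n).
Proof.
move=> [OA extA] Pn ne; split; first exact: Omega_dotP.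
by move=> la [mu [<- em Aml]]; exact: extendable_dotP em (extA _ Aml).
Qed.

Lemma Omega_deg_inj A a b : Omega g A -> A a -> A b -> d a = d b -> a = b.
Proof.
by move=> [_ _ _ dA] Aa Ab dab; have [nu [_ l1 l2]] := dA a b Aa Ab; exact: lep_deg_inj l1 l2 dab.
Qed.

Lemma not_boundary_witness A : Omega g A -> ~ boundary_path g A ->
  exists la E, [/\ A la, compact E, exhaustive g E, nbhs (s la) (r @` E) &
                   forall mu, E mu -> s la = r mu -> ~ A (c la mu)].
Proof.
move=> OA nbA; apply: contrapT => noW; apply: nbA; split => // la Ala.
split => // E cE exE nE; apply: contrapT => noext.
by apply: noW; exists la, E; split => // mu Emu emu Amu; apply: noext; exists mu.
Qed.

Lemma closed_boundary : closed_in_Omega g (boundary_path g).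
Proof.
move=> A OA nbA; have [la [E [Ala cE exE nE noext]]] := not_boundary_witness OA nbA.
have [W cW [NW Wd]] : exists2 W, compact W & nbhs la W /\ W `<=` d @^-1` [set d la].
  apply: compact_nbhs_sub hausdorff_L locally_compact_L _.
  by apply: open_nbhs_nbhs; split => //; exact: open_deg_fibre.
pose K := compU g @` ((W `*` E) `&` composable g).
pose U := interior W `&` s @^-1` (interior (r @` E)).
exists K, [set U]; split.
- apply: continuous_compact.
    exact: continuous_subspaceW (@subIsetr _ _ _) continuous_compU.
  exact: compact_closedI (compact_setX cW cE) closed_composable.
- exact: finite_set1.
- move=> _ ->; apply: openI; first exact: open_interior.
  by apply: open_comp; [move=> x _; exact: continuous_src|exact: open_interior].
- split.
    rewrite -subset0 => x [Ax [[a mu] [[Wa Emu] emu] ex]]; subst x.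
    have Aa : A a by case: OA => _ _ hA _; exact: hA Ax (lep_comp emu).
    have ela : la = a by apply: Omega_deg_inj OA Ala Aa _; rewrite Wd.
    by subst a; exact: noext Emu emu Ax.
  by move=> _ ->; exists la; split => //; split => //; exact: nbhs_interior.
- move=> B OB [BK BU] [_ extB].
  have [la' [Bla' [Ula' nla']]] := BU U erefl.
  have [mu [Emu emu Bmu]] := (extB la' Bla').2 E cE exE nla'.
  have : (B `&` K) (c la' mu).
    split => //; exists (la', mu) => //.
    by split => //; split => //; exact: interior_subset.
  by rewrite BK.
Qed.

Lemma rho_mul_lub_prefix B rho y t : hereditary g B ->
  (forall b, B b -> r b = s rho) -> rho_mul g rho B y ->
  islub G P (d y) (d rho) (mul (d rho) t) ->
  exists2 al, B al /\ d al = t & s rho = r al /\ lep y (c rho al).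
Proof.
move=> hB rB [nu [Bnu enu ly]] [yl [t0 Pt0 et] lub].
have Pt : P t by rewrite (gmulI et).
have [k Pk ek] := lub _ (qle_lep ly) (qle_lep (lep_comp enu)).
have dnu : d nu = mul t k by apply: (@gmulI _ G (d rho)); rewrite -deg_comp // ek gmulA.
have [al [be [eab dal _ eal]]] := factor_deg Pt Pk dnu.
have Bal : B al by apply: hB Bnu _; rewrite -eal; exact: lep_comp.
have ral : s rho = r al by rewrite rB.
exists al => //; split => //; apply: lep_qle ly _ _.
  by rewrite -eal; apply: lep_compl => //; exact: lep_comp.
by rewrite deg_comp // dal; exact: yl.
Qed.

Lemma closed_rho_mul B rho : Omega g B -> (forall b, B b -> r b = s rho) ->
  closed (rho_mul g rho B).
Proof.
(* On the slice of degree p, the least upper bound of p and d rho fixes the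
   degree t of a witness in B (rho_mul_lub_prefix), so the slice is a projection
   along the compact set of elements of B of degree t. *)
move=> [_ cB hB _] rB; apply: (closed_fibrewise (f := d) open_deg_fibre) => p.
case: (pselect (exists y, (rho_mul g rho B `&` d @^-1` [set p]) y)); last first.
  move=> none; suff -> : rho_mul g rho B `&` d @^-1` [set p] = set0 by exact: closed0.
  by apply/seteqP; split => // y ?; apply: none; exists y.
move=> [y0 [[nu0 [Bnu0 enu0 ly0]] dy0]].
have [l lubl] :=
  islub_ex qlo (P_deg y0) (P_deg rho) (qle_lep ly0) (qle_lep (lep_comp enu0)).
have lubl' := lubl; case: lubl' => [[p' Pp' elp] [t Pt elt] _].
rewrite elt dy0 in lubl; rewrite dy0 in elp.
pose K := (r @^-1` [set s rho] `&` d @^-1` [set t]) `&` B.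
pose D := fst @^-1` (r @^-1` [set s rho]) : set (L * L).
pose C := D `&` (fun z => (c rho z.1, z.2)) @^-1`
  [set xy | [/\ d xy.1 = mul p p', d xy.2 = p & lep xy.2 xy.1]].
have -> : rho_mul g rho B `&` d @^-1` [set p] = [set y | exists2 x, K x & C (x, y)].
  apply/seteqP; split => y.
  - move=> [By dy]; rewrite -dy in lubl.
    have [al [Bal dal] [ral yal]] := rho_mul_lub_prefix hB rB By lubl.
    exists al; first by split => //; split => //; rewrite /= rB.
    split; first by rewrite /D /= rB.
    by split => //=; rewrite deg_comp // dal -elt elp.
  - move=> [al [[ral dal] Bal] [_ [_ dy yal]]].
    by split => //; exists al; split.
apply: closed_proj_compact.
  exact: compact_closedI (rdp (@compact_set1 _ (s rho)) Pt) cB.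
have cD : closed D.
  apply: preimage_closed; first by move=> z _; exact: continuous_fst.
  apply: preimage_closed; first by move=> z _; exact: continuous_rng.
  by apply: compact_closed; [exact: hausdorff_V|exact: compact_set1].
apply: closed_within_preimage cD _ _; last first.
  by apply: closed_prefix => //; rewrite -dy0; exact: P_deg.
apply: within_continuous_pair; last exact: continuous_subspaceT continuous_snd.
have cfst : {within D, continuous (@fst L L)} by exact: continuous_subspaceT continuous_fst.
apply: (within_continuous_comp_in cfst (continuous_compl (rho := rho))).
by move=> _ [z Dz <-]; rewrite /D /= in Dz *; rewrite Dz.
Qed.

Definition min_ext (W E : set L) : set L :=
  [set be | exists w mu, [/\ W w, s w = r be, E mu, lep mu (c w be) &
                              islub G P (d w) (d mu) (d (c w be))]].

Lemma min_ext_cover W E w tau : exhaustive g E -> W w -> (r @` E) (r w) ->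
  s w = r tau -> exists be ga, [/\ min_ext W E be, lep tau ga & lep be ga].
Proof.
move=> exE Ww rwE ewt.
have /exE [mu Emu [ze [wtze muze]]] : (r @` E) (r (c w tau)) by rewrite rng_comp.
have wze : qle G P (d w) (d ze) by exact: qle_lep (lep_trans (lep_comp ewt) wtze).
have [l lubl] := islub_ex qlo (P_deg w) (P_deg mu) wze (qle_lep muze).
have lubl' := lubl; case: lubl' => [[t Pt elt] _ lub].
have [k Pk ek] := lub _ wze (qle_lep muze).
case: wtze => nu [etn eze]; rewrite src_comp // in etn.
pose ga := c tau nu.
have {}eze : ze = c w ga by rewrite eze compA.
have ewg : s w = r ga by rewrite rng_comp.
have dga : d ga = mul t k.
  by apply: (@gmulI _ G (d w)); rewrite -deg_comp // -eze ek elt gmulA.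
have [be [be' [ebb dbe _ ega]]] := factor_deg Pt Pk dga.
have ewb : s w = r be by rewrite ewg -ega rng_comp.
have dwb : d (c w be) = l by rewrite deg_comp // dbe -elt.
exists be, ga; split; last 2 first.
- exact: lep_comp etn.
- by rewrite -ega; exact: lep_comp.
exists w, mu; split => //; last by rewrite dwb.
apply: lep_qle muze _ _; last by rewrite dwb; case: lubl.
by rewrite eze -ega; apply: lep_compl => //; exact: lep_comp.
Qed.

Lemma exhaustive_min_ext W E : exhaustive g E ->
  (forall w, W w -> (r @` E) (r w)) -> exhaustive g (min_ext W E).
Proof.
move=> exE WE tau [be0 [w [mu0 [Ww ewb0 _ _ _]]] ebt]; rewrite ebt in ewb0.
have [be [ga [Mbe l1 l2]]] := min_ext_cover exE Ww (WE _ Ww) ewb0.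
by exists be => //; exists ga.
Qed.

Lemma nbhs_min_ext W E w : exhaustive g E -> (forall w, W w -> (r @` E) (r w)) ->
  nbhs w W -> (forall O, open O -> O `<=` W -> open (s @` O)) ->
  nbhs (s w) (r @` min_ext W E).
Proof.
move=> exE WE NW sopen.
have oS : open (s @` interior W).
  by apply: sopen; [exact: open_interior|exact: interior_subset].
apply: (@filterS _ _ _ (s @` interior W)); last first.
  by apply: open_nbhs_nbhs; split => //; exists w.
move=> _ [w' Iw' <-]; have Ww' := interior_subset Iw'.
have [be [ga [Mbe l1 l2]]] := min_ext_cover exE Ww' (WE _ Ww') (esym (rng_vtx _)).
by exists be => //; rewrite (lep_rng l2) -(lep_rng l1) rng_vtx.
Qed.

Lemma compact_min_ext_deg W E w0 e0 : compact W -> compact E ->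
  W `<=` d @^-1` [set d w0] -> E `<=` d @^-1` [set d e0] -> compact (min_ext W E).
Proof.
move=> cW cE Wd Ed.
have [[l lubl]|nolub] := pselect (exists l, islub G P (d w0) (d e0) l); last first.
  suff -> : min_ext W E = set0 by exact: compact0.
  apply/seteqP; split => // be [w [mu [Ww _ Emu _ lubw]]]; apply: nolub.
  by exists (d (c w be)); rewrite -(Wd _ Ww) -(Ed _ Emu).
have lubl' := lubl; case: lubl' => [[t Pt elt] [p' Pp' elp] _].
pose Y := r @^-1` (s @` W) `&` d @^-1` [set t].
have cY : compact Y.
  by apply: rdp Pt; exact: continuous_compact (continuous_subspaceT continuous_src) cW.
pose D := fst @^-1` composable g : set ((L * L) * L).
pose T := ((W `*` Y) `*` E) `&` (D `&` (fun z => (compU g z.1, z.2)) @^-1`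
  [set xy | [/\ d xy.1 = mul (d e0) p', d xy.2 = d e0 & lep xy.2 xy.1]]).
have cT : compact T.
  apply: compact_closedI; first exact: compact_setX (compact_setX cW cY) cE.
  apply: closed_within_preimage; last exact: closed_prefix (P_deg e0) Pp'.
    apply: preimage_closed closed_composable => z _; exact: continuous_fst.
  apply: within_continuous_pair; last exact: continuous_subspaceT continuous_snd.
  have cfst : {within D, continuous fst} by exact: continuous_subspaceT continuous_fst.
  by apply: (within_continuous_comp_in cfst continuous_compU) => _ [z Dz <-].
have -> : min_ext W E = (snd \o fst) @` T.
  apply/seteqP; split => be.
  - move=> [w [mu [Ww ewb Emu lmu lubw]]].
    rewrite -(Wd _ Ww) -(Ed _ Emu) in lubl; have dwb := islub_uniq qlo lubw lubl.
    have dbe : d be = t.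
      by apply: (@gmulI _ G (d w)); rewrite -deg_comp // dwb elt (Wd _ Ww).
    have Ybe : Y be by split => //; exists w.
    exists ((w, be), mu) => //; split => //; split => //.
    by split; rewrite /= /compU /= ?dwb ?(Ed _ Emu) -?elp.
  - move=> [[[w b] mu] [[[Ww [_ db]] Emu] [ewb [_ dmu lmu]]] <-].
    have dwb : d (c w b) = l by rewrite deg_comp // (Wd _ Ww) db -elt.
    by exists w, mu; split => //; rewrite dwb dmu (Wd _ Ww).
apply: continuous_compact cT; apply: continuous_subspaceT => z.
by apply: continuous_comp; [exact: continuous_fst|exact: continuous_snd].
Qed.

Lemma compact_min_ext W E w0 : compact W -> compact E ->
  W `<=` d @^-1` [set d w0] -> compact (min_ext W E).
Proof.
move=> cW cE Wd; have [sq cov] := compact_fibre_cover cE open_deg_fibre.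
have -> : min_ext W E = \bigcup_(e in [set` sq]) min_ext W (E `&` d @^-1` [set d e]).
  apply/seteqP; split => be.
  - move=> [w [mu [Ww ewb Emu lmu lubw]]]; have [e se dmu] := cov _ Emu.
    by exists e => //; exists w, mu; split.
  - by move=> [e _ [w [mu [Ww ewb [Emu _] lmu lubw]]]]; exists w, mu; split.
rewrite bigcup_seq; apply: bigsetU_compact => e _.
apply: compact_min_ext_deg cW _ Wd (@subIsetr _ _ _).
by apply: compact_closedI cE _; exact: closed_deg_fibre.
Qed.

Lemma extendable_prefix A la w : Omega g A -> s la = r w ->
  extendable g A (c la w) -> extendable g A la.
Proof.
move=> OA esw [Alw extlw]; case: (OA) => _ _ hA _.
split => [|E cE exE nE]; first exact: hA Alw (lep_comp esw).
have [O [oO Ow injO _ openO]] := local_homeo_src w.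
pose N := O `&` (r @^-1` (r @` E) `&` d @^-1` [set d w]).
have NN : nbhs w N.
  apply: filterI; first exact: open_nbhs_nbhs.
  apply: filterI; first by apply: continuous_rng; rewrite -esw.
  by apply: open_nbhs_nbhs; split => //; exact: open_deg_fibre.
have [W cW [NW WN]] := compact_nbhs_sub hausdorff_L locally_compact_L NN.
have rWE w' : W w' -> (r @` E) (r w') by move=> /WN [_ [? _]].
have cE' : compact (min_ext W E).
  by apply: (compact_min_ext (w0 := w) cW cE) => w' /WN [_ [_ ?]].
have nE' : nbhs (s (c la w)) (r @` min_ext W E).
  rewrite src_comp //; apply: nbhs_min_ext exE rWE NW _ => U oU UW.
  by apply: openO oU (subset_trans UW (fun w' h => (WN _ h).1)).
have [be [[w' [mu [Ww' ewb Emu lmu _]]] ebe Ab]] :=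
  extlw _ cE' (exhaustive_min_ext exE rWE) nE'.
have ew : w' = w by apply: injO; [exact: (WN _ Ww').1|exact: Ow|rewrite ewb -ebe src_comp].
subst w'; have rmu : s la = r mu by rewrite esw (lep_rng lmu) rng_comp.
exists mu; split => //; apply: hA Ab _.
by rewrite compA //; exact: lep_compl.
Qed.

Lemma Omega_rho_mul B rho : Omega g B -> (forall b, B b -> r b = s rho) ->
  Omega g (rho_mul g rho B).
Proof.
move=> OB rB; case: (OB) => -[b0 Bb0] _ hB dB; split.
- by exists rho, b0; split => //; [rewrite rB|apply: lep_comp; rewrite rB].
- exact: closed_rho_mul.
- by move=> la mu [nu [Bnu e l]] ml; exists nu; split => //; exact: lep_trans ml l.
- move=> la1 la2 [nu1 [B1 e1 l1]] [nu2 [B2 e2 l2]].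
  have [nu [Bnu m1 m2]] := dB _ _ B1 B2.
  have enu : s rho = r nu by rewrite rB.
  exists (c rho nu); split; first by exists nu; split => //; exact: lep_refl.
  + exact: lep_trans l1 (lep_compl e1 m1).
  + exact: lep_trans l2 (lep_compl e2 m2).
Qed.

Lemma extendable_rho_mul B rho nu : s rho = r nu ->
  extendable g B nu -> extendable g (rho_mul g rho B) (c rho nu).
Proof.
move=> enu [Bnu ext]; split => [|E cE exE nE].
  by exists nu; split => //; exact: lep_refl.
rewrite src_comp // in nE; have [mu [Emu e Bm]] := ext E cE exE nE.
exists mu; rewrite src_comp //; split => //.
by exists (c nu mu); rewrite rng_comp // compA //; split => //; exact: lep_refl.
Qed.

Lemma boundary_rho_mul B rho : boundary_path g B -> (forall b, B b -> r b = s rho) ->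
  boundary_path g (rho_mul g rho B).
Proof.
move=> [OB extB] rB; have OrB := Omega_rho_mul OB rB.
split => // la [nu [Bnu enu [w [ew ela]]]].
apply: extendable_prefix OrB ew _; rewrite -ela.
exact: extendable_rho_mul enu (extB _ Bnu).
Qed.

End PGraph.

Theorem proposition6p16 (Q : Type) (G : group_law Q) (P : set Q)
    (L V : topologicalType) (g : PGraph Q L V) :
  quasi_lattice_ordered G P ->
  is_topological_PGraph G P g ->
  rd_proper P g ->
  [/\ closed_in_Omega g (boundary_path g),
      (forall (A : set L) (n : Q), boundary_path g A -> P n ->
         dotP g A n !=set0 -> boundary_path g (dotP g A n)) &
      (forall (B : set L) (rho : L), boundary_path g B ->
         (forall b, B b -> rng g b = src g rho) ->
         boundary_path g (rho_mul g rho B))].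
Proof.
move=> qlo tg rdp; split.
- exact: closed_boundary tg.
- exact: boundary_dotP tg rdp.
- exact: boundary_rho_mul qlo tg rdp.
Qed.
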